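(* Let $q$ be odd, $q\not\equiv0\pmod 3$. Then the point $\mathbf P(1,0,1,0)$ is a $1_\Gamma$-point if $q\equiv-1\pmod3$ and a $3_\Gamma$-point if $q\equiv1\pmod3$.
   Context: In $\mathrm{PG}(3,q)$ with points $\mathbf P(x_0,x_1,x_2,x_3)$, the twisted cubic is $\mathcal C=\{\mathbf P(t^3,t^2,t,1):t\in\mathbb F_q\}\cup\{\mathbf P(1,0,0,0)\}$. Its osculating planes ($\Gamma$-planes) are $x_0-3tx_1+3t^2x_2-t^3x_3=0$ for $t\in\mathbb F_q$ and $x_3=0$. A $\mu_\Gamma$-point ($\mu\in\{1,3\}$) is a point off $\mathcal C$ lying in exactly $\mu$ distinct $\Gamma$-planes. *)

From HB Require Import structures.
From mathcomp Require Import all_boot all_order all_algebra all_field.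
Set Implicit Arguments. Unset Strict Implicit. Unset Printing Implicit Defensive.
Import GRing.Theory.
Local Open Scope ring_scope.

(* Homogeneous coordinates (x0,x1,x2,x3) of PG(3,q) over a finite field F. *)
Definition vec4 (F : finFieldType) := (F * F * F * F)%type.

Definition mkv (F : finFieldType) (a b c d : F) : vec4 F := (a, b, c, d).

Definition zerov (F : finFieldType) : vec4 F := mkv 0 0 0 0.

Definition scalev (F : finFieldType) (c : F) (v : vec4 F) : vec4 F :=
  let: (a, b, e, d) := v in mkv (c * a) (c * b) (c * e) (c * d).

Definition dot4 (F : finFieldType) (u v : vec4 F) : F :=
  let: (a0, a1, a2, a3) := u in let: (b0, b1, b2, b3) := v in
  a0 * b0 + a1 * b1 + a2 * b2 + a3 * b3.

Definition same_point (F : finFieldType) (x v : vec4 F) : Prop :=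
  exists c : F, c != 0 /\ x = scalev c v.

Definition on_cubic (F : finFieldType) (x : vec4 F) : Prop :=
  (exists t : F, same_point x (mkv (t ^+ 3) (t ^+ 2) t 1))
  \/ same_point x (mkv 1 0 0 0).

(* Coordinates of the osculating (Gamma-)planes:
   Some t  ~ x0 - 3t x1 + 3t^2 x2 - t^3 x3 = 0,   None ~ x3 = 0. *)
Definition gamma_coef (F : finFieldType) (o : option F) : vec4 F :=
  match o with
  | Some t => mkv 1 (- (3%:R * t)) (3%:R * t ^+ 2) (- t ^+ 3)
  | None => mkv 0 0 0 1
  end.

(* A plane of PG(3,q), identified with its set of (nonzero) coordinate
   vectors, so that equal sets = equal planes. *)
Definition plane_pts (F : finFieldType) (u : vec4 F) : {set vec4 F} :=
  [set x : vec4 F | (x != zerov F) && (dot4 u x == 0)].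

Definition gamma_planes_through (F : finFieldType) (x : vec4 F)
  : {set {set vec4 F}} :=
  [set plane_pts (gamma_coef o) | o in [pred o : option F | dot4 (gamma_coef o) x == 0]].

Definition mu_Gamma_point (F : finFieldType) (mu : nat) (x : vec4 F) : Prop :=
  ~ on_cubic x /\ #|gamma_planes_through x| = mu.

(** The Gamma-plane with parameter t contains P(1,0,1,0) iff 1 + 3t^2 = 0,
    and the plane x3 = 0 always does.  With 2 and 3 invertible, the
    substitution w = (3t - 1)/2 turns 1 + 3t^2 = 0 into w^2 + w + 1 = 0, so
    1 + 3t^2 has a root exactly when F has a primitive cube root of unity,
    i.e. when 3 divides q - 1; in that case its roots are t0 and -t0.  Since
    distinct osculating planes are distinct planes, the point lies in 1 or 3
    Gamma-planes accordingly. *)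

From HB Require Import structures.
From mathcomp Require Import all_boot all_order all_fingroup all_solvable.
From mathcomp Require Import all_algebra all_field.
From mathcomp Require Import zify ring.
Import GRing.Theory FinRing.Theory.
Local Open Scope ring_scope.
Set Implicit Arguments. Unset Strict Implicit.

Definition cubic_point (F : finFieldType) (o : option F) : vec4 F :=
  if o is Some t then mkv (t ^+ 3) (t ^+ 2) t 1 else mkv 1 0 0 0.

Lemma cubic_point_on_gamma (F : finFieldType) (o : option F) :
  cubic_point o \in plane_pts (gamma_coef o).
Proof.
rewrite inE; apply/andP; split.
  by case: o => [t|]; rewrite /cubic_point /zerov /mkv !xpair_eqE oner_eq0 ?andbF.
by case: o => [t|] /=; apply/eqP; ring.
Qed.

(* Each osculating plane meets the cubic only at its own point of osculation. *)
Lemma gamma_plane_inj (F : finFieldType) :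
  injective (fun o : option F => plane_pts (gamma_coef o)).
Proof.
move=> o1 o2 /= eq_pl.
have := cubic_point_on_gamma o1; rewrite eq_pl inE => /andP[_].
case: o1 o2 {eq_pl} => [t|] [s|] //=.
- have -> : 1 * t ^+ 3 + - (3%:R * s) * t ^+ 2 + 3%:R * s ^+ 2 * t + - s ^+ 3 * 1
      = (t - s) ^+ 3 by ring.
  by rewrite expf_eq0 /= subr_eq0 => /eqP ->.
- by rewrite !mul0r !add0r mul1r oner_eq0.
- by rewrite !mulr0 !addr0 mulr1 oner_eq0.
Qed.

Lemma card_gamma_planes_through (F : finFieldType) (x : vec4 F) :
  #|gamma_planes_through x| = #|[pred o : option F | dot4 (gamma_coef o) x == 0]|.
Proof. by rewrite card_imset //; apply: gamma_plane_inj. Qed.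

Lemma not_on_cubic_1010 (F : finFieldType) : ~ on_cubic (mkv (1 : F) 0 1 0).
Proof.
case=> [[t [c [c0 e]]] | [c [c0 e]]]; move: e; rewrite /scalev /mkv; case.
- by move=> _ _ _ /eqP; rewrite mulr1 eq_sym (negbTE c0).
- by move=> _ _ /eqP; rewrite mulr0 oner_eq0.
Qed.

Lemma card_gamma_planes_through_1010 (F : finFieldType) :
  #|gamma_planes_through (mkv (1 : F) 0 1 0)|
    = #|[set t : F | 1 + 3%:R * t ^+ 2 == 0]|.+1.
Proof.
set roots := [set t : F | _].
have None_notin : None \notin Some @: roots by apply/imsetP => -[].
rewrite card_gamma_planes_through -(card_imset _ (@Some_inj _)).
transitivity #|None |: Some @: roots|; last by rewrite cardsU1 None_notin.
apply: eq_card => -[t|]; rewrite !inE /=.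
  rewrite (mem_imset _ _ (@Some_inj _)) inE.
  by congr (_ == 0); ring.
by apply/eqP; ring.
Qed.

Section CubeRootsOfUnity.

Variable F : fieldType.
Hypotheses (two_neq0 : 2%:R != 0 :> F) (three_neq0 : 3%:R != 0 :> F).

Lemma one_add_3sqr_eq0_cube_root (t w : F) : 2%:R * w = 3%:R * t - 1 ->
  (1 + 3%:R * t ^+ 2 == 0) = (w ^+ 2 + w + 1 == 0).
Proof.
move=> def_w.
have four_neq0 : 4%:R != 0 :> F by rewrite (natrM _ 2 2) mulf_neq0.
have scale : 4%:R * (w ^+ 2 + w + 1) = 3%:R * (1 + 3%:R * t ^+ 2).
  transitivity ((2%:R * w) ^+ 2 + 2%:R * (2%:R * w) + 4%:R); first by ring.
  by rewrite def_w; ring.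
apply/eqP/eqP => root.
- by apply: (mulfI four_neq0); rewrite scale root !mulr0.
- by apply: (mulfI three_neq0); rewrite -scale root !mulr0.
Qed.

Lemma one_add_3sqr_eq0_pm (t0 t : F) : 1 + 3%:R * t0 ^+ 2 = 0 ->
  (1 + 3%:R * t ^+ 2 == 0) = (t == t0) || (t == - t0).
Proof.
move=> root_t0.
have -> : 1 + 3%:R * t ^+ 2 = 3%:R * (t ^+ 2 - t0 ^+ 2).
  transitivity (3%:R * (t ^+ 2 - t0 ^+ 2) + (1 + 3%:R * t0 ^+ 2)); first by ring.
  by rewrite root_t0 addr0.
by rewrite mulf_eq0 (negbTE three_neq0) subr_eq0 eqf_sqr.
Qed.

Lemma cube_root_one_add_3sqr_eq0 (w : F) : w ^+ 2 + w + 1 = 0 ->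
  1 + 3%:R * ((2%:R * w + 1) / 3%:R) ^+ 2 = 0.
Proof.
move=> cube_w; apply/eqP; rewrite (one_add_3sqr_eq0_cube_root (w := w)) ?cube_w //.
by rewrite [3%:R * _]mulrC divfK // addrK.
Qed.

End CubeRootsOfUnity.

Section FiniteField.

Variable F : finFieldType.

Lemma natf_neq0_ndvd_card p : prime p -> ~~ (p %| #|F|)%N -> p%:R != 0 :> F.
Proof.
move=> p_pr; apply: contraNN => /eqP p_eq0.
have p_char : p \in [pchar F] by rewrite inE p_pr p_eq0 eqxx.
have := abelem_pgroup (fin_ring_pchar_abelem p_char).
rewrite /pgroup cardsT => /p_natP [[|k] cardF]; rewrite cardF.
  by have := finNzRing_gt1 F; rewrite cardF.
by rewrite expnS dvdn_mulr.
Qed.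

Lemma exists_cube_root_unity : (#|F| %% 3 = 1)%N ->
  exists w : F, w ^+ 2 + w + 1 = 0.
Proof.
move=> q_mod3.
have three_dvd : (3 %| #|[set: {unit F}]|)%N.
  by rewrite card_finField_unit; have := finNzRing_gt1 F; lia.
have [u _ ord_u] := Cauchy (isT : prime 3) three_dvd.
exists (val u).
have u3 : val u ^+ 3 = 1 by rewrite -val_unitX -ord_u expg_order.
have u_neq1 : val u - 1 != 0.
  rewrite subr_eq0; apply/eqP => u1; move: ord_u.
  by rewrite (_ : u = 1%g) ?order1 //; apply: val_inj.
apply: (mulfI u_neq1); rewrite mulr0.
have -> : (val u - 1) * (val u ^+ 2 + val u + 1) = val u ^+ 3 - 1 by ring.
by rewrite u3 subrr.
Qed.

(* A root w of w^2 + w + 1 has w^3 = 1, so w = w^q = w^2 forces w = 0 or 1. *)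
Lemma no_cube_root_unity : (#|F| %% 3 = 2)%N ->
  forall w : F, w ^+ 2 + w + 1 != 0.
Proof.
move=> q_mod3 w; apply/negP => /eqP cube_w.
have three_neq0 : 3%:R != 0 :> F by apply: natf_neq0_ndvd_card; rewrite // /dvdn q_mod3.
have w3 : w ^+ 3 = 1.
  apply/eqP; rewrite -subr_eq0.
  have -> : w ^+ 3 - 1 = (w - 1) * (w ^+ 2 + w + 1) by ring.
  by rewrite cube_w mulr0.
have := expf_card w; rewrite (divn_eq #|F| 3) q_mod3 exprD mulnC exprM w3 expr1n mul1r.
move/eqP; rewrite -subr_eq0.
have -> : w ^+ 2 - w = w * (w - 1) by ring.
rewrite mulf_eq0 subr_eq0 => /orP[] /eqP w_eq; move: cube_w; rewrite w_eq.
- by rewrite expr0n !add0r => /eqP; rewrite oner_eq0.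
- by rewrite expr1n -(natrD _ 1 1) -(natrD _ 2 1) => /eqP; rewrite (negbTE three_neq0).
Qed.

Lemma one_add_3sqr_roots_mod3_2 : odd #|F| -> (#|F| %% 3 = 2)%N ->
  [set t : F | 1 + 3%:R * t ^+ 2 == 0] = set0.
Proof.
move=> odd_q q_mod3.
have two_neq0 : 2%:R != 0 :> F by apply: natf_neq0_ndvd_card; rewrite // dvdn2 odd_q.
have three_neq0 : 3%:R != 0 :> F by apply: natf_neq0_ndvd_card; rewrite // /dvdn q_mod3.
apply/setP => t; rewrite !inE.
rewrite (one_add_3sqr_eq0_cube_root two_neq0 three_neq0 (w := (3%:R * t - 1) / 2%:R)).
  exact/negbTE/no_cube_root_unity.
by rewrite mulrC divfK.
Qed.

Lemma card_one_add_3sqr_roots_mod3_1 : odd #|F| -> (#|F| %% 3 = 1)%N ->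
  #|[set t : F | 1 + 3%:R * t ^+ 2 == 0]| = 2.
Proof.
move=> odd_q q_mod3.
have two_neq0 : 2%:R != 0 :> F by apply: natf_neq0_ndvd_card; rewrite // dvdn2 odd_q.
have three_neq0 : 3%:R != 0 :> F by apply: natf_neq0_ndvd_card; rewrite // /dvdn q_mod3.
have [w cube_w] := exists_cube_root_unity q_mod3.
set t0 := (2%:R * w + 1) / 3%:R.
have root_t0 : 1 + 3%:R * t0 ^+ 2 = 0 := cube_root_one_add_3sqr_eq0 two_neq0 three_neq0 cube_w.
have t0_neq0 : t0 != 0.
  by apply/eqP => t0_eq0; move/eqP: root_t0; rewrite t0_eq0 expr0n mulr0 addr0 oner_eq0.
have t0_neq_opp : t0 != - t0.
  by rewrite -addr_eq0 -mulr2n -mulr_natr mulf_eq0 negb_or t0_neq0 two_neq0.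
suff -> : [set t : F | 1 + 3%:R * t ^+ 2 == 0] = [set t0; - t0] by rewrite cards2 t0_neq_opp.
by apply/setP => t; rewrite !inE (one_add_3sqr_eq0_pm three_neq0 _ root_t0).
Qed.

End FiniteField.

Theorem lemma5p1 (F : finFieldType) :
  odd #|F| -> (#|F| %% 3 != 0)%N ->
  ((#|F| %% 3 = 2)%N -> mu_Gamma_point 1 (mkv (1 : F) 0 1 0)) /\
  ((#|F| %% 3 = 1)%N -> mu_Gamma_point 3 (mkv (1 : F) 0 1 0)).
Proof.
move=> odd_q _; split=> q_mod3; split; try exact: not_on_cubic_1010.
- by rewrite card_gamma_planes_through_1010 one_add_3sqr_roots_mod3_2 ?cards0.
- by rewrite card_gamma_planes_through_1010 card_one_add_3sqr_roots_mod3_1.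
Qed.
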